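(* Let $n\geq 3$ and consider the $n$-cycle scenario. For every nondisturbing strongly contextual behavior $\{p_1,\dots,p_n\}$ there exist $k\in\{1,\dots,n\}$ and $(a_1,\dots,a_n)\in\{0,1\}^n$ (with $a_{n+1}:=a_1$) such that $\bar p_k(a_k,\lnot a_{k+1})=\bar p_k(\lnot a_k,a_{k+1})=1$ and $\bar p_k(a_k,a_{k+1})=\bar p_k(\lnot a_k,\lnot a_{k+1})=0$, and for every $i\neq k$, $\bar p_i(a_i,a_{i+1})=\bar p_i(\lnot a_i,\lnot a_{i+1})=1$ and $\bar p_i(a_i,\lnot a_{i+1})=\bar p_i(\lnot a_i,a_{i+1})=0$, where $\lnot x=1-x$.
   Context: The $n$-cycle scenario has measurements $M_1,\dots,M_n$ with outcomes in $\{0,1\}$ and contexts $\{M_i,M_{i+1}\}$, indices mod $n$. A behavior is a family of probability distributions $p_i$ on $\{0,1\}^2$, $p_i(x,y)$ the probability that $M_i=x$, $M_{i+1}=y$; it is nondisturbing if $\sum_y p_i(y,x)=\sum_y p_{i+1}(x,y)$ for all $i,x$. Set $\bar p_i(x,y)=1$ if $p_i(x,y)>0$ and $0$ otherwise. The behavior is strongly contextual if there is no $t\in\{0,1\}^n$ with $p_i(t_i,t_{i+1})>0$ for all $i$. *)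

From HB Require Import structures.
From mathcomp Require Import all_boot all_order all_algebra.
Set Implicit Arguments. Unset Strict Implicit. Unset Printing Implicit Defensive.
Import Order.TTheory GRing.Theory Num.Theory.
Local Open Scope ring_scope.

(* n-cycle scenario: measurements M_0..M_{n-1} indexed by 'I_n, outcomes bool
   (false = 0, true = 1); context i is {M_i, M_{i+1 mod n}}; the cyclic
   successor is fintype's [ordS] (value i.+1 %% n).
   A behavior is p : 'I_n -> bool -> bool -> R, p i x y = Prob(M_i = x, M_{i+1} = y). *)

Definition behavior (R : realFieldType) (n : nat) := 'I_n -> bool -> bool -> R.

Definition is_behavior (R : realFieldType) (n : nat) (p : behavior R n) : Prop :=
  forall i : 'I_n,
    (forall x y, 0 <= p i x y) /\ \sum_(x : bool) \sum_(y : bool) p i x y = 1.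

Definition nondisturbing (R : realFieldType) (n : nat) (p : behavior R n) : Prop :=
  forall (i : 'I_n) (x : bool),
    \sum_(y : bool) p i y x = \sum_(y : bool) p (ordS i) x y.

Definition pbar (R : realFieldType) (n : nat) (p : behavior R n)
  (i : 'I_n) (x y : bool) : bool := 0 < p i x y.

Definition strongly_contextual (R : realFieldType) (n : nat) (p : behavior R n) : Prop :=
  ~ exists t : 'I_n -> bool, forall i : 'I_n, 0 < p i (t i) (t (ordS i)).

From HB Require Import structures.
From mathcomp Require Import all_boot all_order all_algebra.
From mathcomp Require Import lra.
Import Order.TTheory GRing.Theory Num.Theory.

(* Let m_i(x) be the marginal of M_i.  If some m_i(x) vanished, the value
   ~x would be forced at M_i; following the support of the p_j from it once
   around the cycle (nondisturbance keeps the current value in the support of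
   the next marginal) returns to ~x and yields a global section.  So every
   support has nonempty rows and columns and contains a perfect matching
   x |-> x (+) c_i.  Matchings whose parities sum to 0 glue to a global
   section, so the parity of c is odd; then any further support point would
   complete a global section using that point and the matchings elsewhere.
   Hence each support is exactly its matching, and the prefix parities of c
   give the vector a, with the defect in the last context. *)

Definition has_global_section {n} (S : 'I_n -> bool -> bool -> bool) :=
  exists t : 'I_n -> bool, forall i, S i (t i) (t (ordS i)).

Lemma ordS_addr n (i s : 'I_n.+1) : ordS (i + s)%R = (ordS i + s)%R.
Proof.
by apply: val_inj => /=; rewrite modnDml -[in LHS]addn1 modnDml addnAC addn1.
Qed.

Lemma ltn_ord_max n (i : 'I_n.+1) : (i < n)%N = (i != ord_max).
Proof. by rewrite -(inj_eq val_inj) /= ltn_neqAle -ltnS ltn_ord andbT. Qed.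

Lemma val_ordS n (i : 'I_n.+1) : val (ordS i) = if (i < n)%N then i.+1 else 0%N.
Proof.
rewrite ltn_ord_max; case: eqP => [-> | /eqP ne] /=; first by rewrite modnn.
by rewrite modn_small // ltnS ltn_ord_max.
Qed.

Lemma ordS_inord n m : (m < n)%N -> ordS (inord m : 'I_n.+1) = inord m.+1.
Proof.
move=> lt_mn; have lt_m : (m < n.+1)%N by apply: ltnW.
by apply: val_inj; rewrite val_ordS inordK // lt_mn /= inordK.
Qed.

Lemma ordS_ord_max n : ordS (ord_max : 'I_n.+1) = ord0.
Proof. by apply: val_inj; rewrite val_ordS ltnn. Qed.

Lemma inord0 n : inord 0 = ord0 :> 'I_n.+1.
Proof. by apply: val_inj; rewrite /= inordK. Qed.

Lemma inord_max n : inord n = ord_max :> 'I_n.+1.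
Proof. by apply: val_inj; rewrite /= inordK. Qed.

Section CyclicSections.
Variables (n : nat) (S : 'I_n.+1 -> bool -> bool -> bool).

Lemma global_section_shift (s : 'I_n.+1) :
  has_global_section (fun i => S (i + s)%R) -> has_global_section S.
Proof.
case=> t St; exists (fun i => t (i - s)%R) => i.
by have := St (i - s)%R; rewrite ordS_addr subrK.
Qed.

Lemma global_section_of_seq (t : nat -> bool) :
  (forall i : 'I_n.+1, (i < n)%N -> S i (t i) (t i.+1)) ->
  S ord_max (t n) (t 0%N) -> has_global_section S.
Proof.
move=> St Sn; exists (fun i => t (val i)) => i; rewrite val_ordS.
by case: ifP => [/St // |]; rewrite ltn_ord_max => /negbFE/eqP ->.
Qed.

Variable P : 'I_n.+1 -> bool -> bool.
Hypothesis S_P : forall {i x y}, S i x y -> P (ordS i) y.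
Hypothesis P_S : forall i x, P i x -> exists y, S i x y.

Let S_next {i x} : P i x -> S i x (S i x true).
Proof.
case/P_S => y Sxy; case Sxt: (S i x true) => //.
by case: y Sxy; rewrite ?Sxt.
Qed.

Lemma global_section_of_forced_value0 v :
  P ord0 v -> ~~ P ord0 (~~ v) -> has_global_section S.
Proof.
move=> Pv nPv; pose t m := iteri m (fun k x => S (inord k) x true) v.
have Pt m : (m <= n)%N -> P (inord m) (t m).
  elim: m => [_ | m IHm lt_mn]; first by rewrite inord0.
  by rewrite -ordS_inord //; apply: S_P (S_next (IHm (ltnW lt_mn))).
apply: (@global_section_of_seq t) => [i _ | ].
  by have := S_next (Pt i (ltn_ord i)); rewrite /t /= inord_val.
have Pn : P ord_max (t n) by rewrite -inord_max; apply: Pt.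
have := S_P (S_next Pn); rewrite ordS_ord_max => Pw.
suff -> : t 0%N = S ord_max (t n) true by apply: S_next.
by move: Pv nPv Pw; rewrite /t /=; case: (S _ _ true); case: (v) => // _ /negbTE ->.
Qed.

End CyclicSections.

Lemma global_section_of_forced_value n (S : 'I_n.+1 -> bool -> bool -> bool)
    (P : 'I_n.+1 -> bool -> bool) j v :
  (forall i x y, S i x y -> P (ordS i) y) ->
  (forall i x, P i x -> exists y, S i x y) ->
  P j v -> ~~ P j (~~ v) -> has_global_section S.
Proof.
move=> S_P P_S Pv nPv; apply: (@global_section_shift _ _ j).
apply: (@global_section_of_forced_value0 _ _ (fun i => P (i + j)%R) _ _ v).
- by move=> i x y; rewrite -ordS_addr; apply: S_P.
- by move=> i x; apply: P_S.
- by rewrite add0r.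
- by rewrite add0r.
Qed.

Definition prefix_xor {n} (c : 'I_n.+1 -> bool) (m : nat) : bool :=
  \big[addb/false]_(k < m) c (inord k).

Lemma prefix_xor0 n (c : 'I_n.+1 -> bool) : prefix_xor c 0 = false.
Proof. exact: big_ord0. Qed.

Lemma prefix_xorS n (c : 'I_n.+1 -> bool) m :
  prefix_xor c m.+1 = prefix_xor c m (+) c (inord m).
Proof. exact: big_ord_recr. Qed.

Section MatchingSupport.
Variables (n : nat) (S : 'I_n.+1 -> bool -> bool -> bool) (c : 'I_n.+1 -> bool).
Hypothesis S_matching : forall i x, S i x (x (+) c i).

Lemma global_section_of_matching y :
  S ord_max (y (+) prefix_xor c n) y -> has_global_section S.
Proof.
move=> Sn; apply: (@global_section_of_seq _ _ (fun m => y (+) prefix_xor c m)) => [i _ |].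
  by rewrite prefix_xorS inord_val addbA.
by rewrite prefix_xor0 addbF.
Qed.

Hypothesis no_section : ~ has_global_section S.

Lemma matching_parity_odd : prefix_xor c n (+) c ord_max.
Proof.
apply/negPn/negP => /negbTE even; apply: no_section.
by apply: (global_section_of_matching false); rewrite /= -[X in S _ _ X]even.
Qed.

Lemma matching_support_max x y : S ord_max x y -> x (+) y = c ord_max.
Proof.
move=> Sxy; case: (eqVneq (x (+) y) (c ord_max)) => // ne; case: no_section.
apply: (global_section_of_matching y).
suff -> : y (+) prefix_xor c n = x by [].
by move: matching_parity_odd ne; case: (x) (y) (c _) (prefix_xor c n) => [] [] [] [].
Qed.

End MatchingSupport.

Lemma matching_supportE n (S : 'I_n.+1 -> bool -> bool -> bool) c :
  (forall i x, S i x (x (+) c i)) -> ~ has_global_section S ->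
  forall i x y, S i x y = (x (+) y == c i).
Proof.
move=> S_matching no_section i x y.
apply/idP/eqP => [Sxy | xy_c]; last by rewrite -(addKb x y) xy_c.
pose s := (i - ord_max)%R; have i_def : (ord_max + s)%R = i by rewrite addrC subrK.
rewrite -i_def.
apply: (@matching_support_max _ (fun j => S (j + s)%R) (fun j => c (j + s)%R)).
- by move=> j z; apply: S_matching.
- by move=> sec; apply: no_section; apply: global_section_shift sec.
- by rewrite i_def.
Qed.

Lemma bool_rel_matching (S : bool -> bool -> bool) :
  (forall x, exists y, S x y) -> (forall y, exists x, S x y) ->
  exists c, forall x, S x (x (+) c).
Proof.
move=> rows cols; exists (~~ (S false false && S true true)).
have row x : S x false || S x true by have [[] ->] := rows x; rewrite ?orbT.
have col y : S false y || S true y by have [[] ->] := cols y; rewrite ?orbT.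
move: (row false) (row true) (col false) (col true).
case e00: (S false false); case e01: (S false true);
  case e10: (S true false); case e11: (S true true) => //= _ _ _ _ [] /=;
  by rewrite ?e00 ?e01 ?e10 ?e11.
Qed.

Lemma xor_eq_pattern x y e : y = x (+) e ->
  [/\ (x (+) y == e) = true, (~~ x (+) ~~ y == e) = true,
      (x (+) ~~ y == e) = false & (~~ x (+) y == e) = false].
Proof. by move=> ->; case: x e => [] []. Qed.

Local Open Scope ring_scope.

Lemma sumr_gt0_exists (R : numDomainType) (I : finType) (F : I -> R) :
  (forall i, 0 <= F i) -> 0 < \sum_i F i -> exists i, 0 < F i.
Proof.
move=> F_ge0 /lt0r_neq0/eqP/(psumr_neq0P (fun i _ => F_ge0 i)) [i /andP[_ Fi]].
by exists i.
Qed.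

Definition marginal {R : realFieldType} {n} (p : behavior R n) (i : 'I_n) (x : bool)
  : R :=
  \sum_(y : bool) p i x y.

Section Behavior.
Variables (R : realFieldType) (n : nat) (p : behavior R n.+1).
Hypotheses (p_behavior : is_behavior p) (p_nondisturbing : nondisturbing p).

Let p_ge0 i x y : 0 <= p i x y. Proof. by have [ge0 _] := p_behavior i. Qed.

Lemma marginal_ordS i y : marginal p (ordS i) y = \sum_(x : bool) p i x y.
Proof. by rewrite /marginal -p_nondisturbing. Qed.

Lemma pbar_marginal_gt0 i x y : pbar p i x y -> 0 < marginal p (ordS i) y.
Proof.
rewrite /pbar marginal_ordS big_bool /=.
by have := p_ge0 i true y; have := p_ge0 i false y; case: x; lra.
Qed.

Lemma marginal_gt0_pbar i x : 0 < marginal p i x -> exists y, pbar p i x y.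
Proof. exact: sumr_gt0_exists. Qed.

Lemma marginal_ordS_gt0_pbar i y :
  0 < marginal p (ordS i) y -> exists x, pbar p i x y.
Proof. by rewrite marginal_ordS; apply: sumr_gt0_exists. Qed.

Lemma marginalN_gt0 i x : ~~ (0 < marginal p i x) -> 0 < marginal p i (~~ x).
Proof.
have [_] := p_behavior i; rewrite big_bool -leNgt /marginal.
by case: x => /=; lra.
Qed.

Hypothesis p_strongly_contextual : strongly_contextual p.

Lemma marginal_gt0 i x : 0 < marginal p i x.
Proof.
apply/negPn/negP => m0; apply: p_strongly_contextual.
pose positive_marginal i x := 0 < marginal p i x.
apply: (@global_section_of_forced_value _ (pbar p) positive_marginal i (~~ x)).
- exact: pbar_marginal_gt0.
- exact: marginal_gt0_pbar.
- exact: marginalN_gt0.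
- by rewrite negbK.
Qed.

Lemma pbar_xor_matching :
  exists c, forall i x y, pbar p i x y = (x (+) y == c i).
Proof.
have /fin_all_exists [c matching] : forall i, exists c, forall x, pbar p i x (x (+) c).
  move=> i; apply: bool_rel_matching => [x | y].
    exact/marginal_gt0_pbar/marginal_gt0.
  exact/marginal_ordS_gt0_pbar/marginal_gt0.
by exists c; apply: matching_supportE.
Qed.

End Behavior.

Theorem theorem5 (R : realFieldType) (n : nat) (hn : (3 <= n)%N)
  (p : behavior R n) :
  is_behavior p -> nondisturbing p -> strongly_contextual p ->
  exists (k : 'I_n) (a : 'I_n -> bool),
    [/\ pbar p k (a k) (~~ a (ordS k)) = true,
        pbar p k (~~ a k) (a (ordS k)) = true,
        pbar p k (a k) (a (ordS k)) = false
      & pbar p k (~~ a k) (~~ a (ordS k)) = false] /\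
    forall i : 'I_n, i != k ->
      [/\ pbar p i (a i) (a (ordS i)) = true,
          pbar p i (~~ a i) (~~ a (ordS i)) = true,
          pbar p i (a i) (~~ a (ordS i)) = false
        & pbar p i (~~ a i) (a (ordS i)) = false].
Proof.
(* the bound [3 <= n] is only needed to exclude [n = 0] *)
case: n hn p => [|n] // _ p p_behavior p_nondisturbing p_sc.
have [c pbarE] := @pbar_xor_matching _ _ p p_behavior p_nondisturbing p_sc.
have odd : prefix_xor c n (+) c ord_max.
  by apply: (@matching_parity_odd _ (pbar p)) => // i x; rewrite pbarE addKb.
pose a (i : 'I_n.+1) := prefix_xor c i.
have a_ordS i : a (ordS i) = a i (+) c i (+) (i == ord_max).
  rewrite /a val_ordS ltn_ord_max; case: eqP => [-> | _] /=.
    by rewrite prefix_xor0; move: odd; case: (prefix_xor _ _) (c _) => [] [].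
  by rewrite prefix_xorS inord_val addbF.
exists ord_max, a; split => [|i ne_ik]; rewrite !pbarE.
- have := xor_eq_pattern (a ord_max) (~~ a (ordS ord_max)) (c ord_max).
  by rewrite !negbK; apply; rewrite a_ordS eqxx addbT negbK.
- by apply: (xor_eq_pattern (a i)); rewrite a_ordS (negbTE ne_ik) addbF.
Qed.
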